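(* Let $p\in\mathbb{R}[x_1,\dots,x_n]$. Then $\|p\|_{1,\mathrm{cheb}}-p\in\mathcal Q(1-x_1^2,\dots,1-x_n^2)_{2\deg(p)}$.
   Context: $\Sigma[x]_r$ is the cone of sums of squares of polynomials in $x=(x_1,\dots,x_n)$ of total degree at most $r$; $\mathcal Q(1-x_1^2,\dots,1-x_n^2)_r=\Sigma[x]_r+\sum_{i=1}^n(1-x_i^2)\Sigma[x]_{r-2}$. $T_k(x)=\cos(k\arccos x)$; for $\alpha\in\mathbb{N}_0^n$, $T_\alpha(x)=\prod_iT_{\alpha_i}(x_i)$; for $p=\sum_\alpha p_\alpha T_\alpha$, $\|p\|_{1,\mathrm{cheb}}=\sum_\alpha|p_\alpha|$. *)

From HB Require Import structures.
From mathcomp Require Import all_boot all_order all_algebra.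
From mathcomp Require Import reals.
From mathcomp Require Import mpoly.
From Stdlib Require Import ClassicalEpsilon.
Set Implicit Arguments. Unset Strict Implicit. Unset Printing Implicit Defensive.
Import Order.TTheory GRing.Theory Num.Theory.
Local Open Scope ring_scope.

Section Defs.
Variables (R : realType) (n : nat).

(* Univariate Chebyshev polynomials of the first kind: T_0 = 1, T_1 = X,
   T_{k+2} = 2 X T_{k+1} - T_k  (the polynomials with T_k(cos t) = cos(k t)). *)
Fixpoint cheb_pair (k : nat) : {poly R} * {poly R} :=
  match k with
  | 0%N => (1, 'X)
  | k'.+1 => let: (a, b) := cheb_pair k' in (b, 2%:R *: 'X * b - a)
  end.
Definition chebT (k : nat) : {poly R} := (cheb_pair k).1.

Definition chebT_var (k : nat) (i : 'I_n) : {mpoly R[n]} :=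
  \sum_(j < size (chebT k)) (chebT k)`_j *: 'X_i ^+ j.

Definition chebT_multi (a : 'X_{1..n}) : {mpoly R[n]} :=
  \prod_(i < n) chebT_var (a i) i.

(* The polynomial sum_alpha c_alpha T_alpha, where the finitely supported
   coefficient family (c_alpha) is stored as the coefficients of an mpoly c. *)
Definition cheb_eval (c : {mpoly R[n]}) : {mpoly R[n]} :=
  \sum_(a <- msupp c) c@_a *: chebT_multi a.

(* The Chebyshev coefficients of p: the (unique) family c with p = sum c_a T_a. *)
Definition cheb_coefs (p : {mpoly R[n]}) : {mpoly R[n]} :=
  epsilon (inhabits 0) (fun c => cheb_eval c = p).

Definition cheb_norm1 (p : {mpoly R[n]}) : R :=
  \sum_(a <- msupp (cheb_coefs p)) `|(cheb_coefs p)@_a|.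

(* total degree; deg 0 := 0 *)
Definition mdegree (p : {mpoly R[n]}) : nat := (msize p).-1.

Definition is_sos (s : {mpoly R[n]}) : Prop :=
  exists qs : seq {mpoly R[n]}, s = \sum_(q <- qs) q ^+ 2.

(* Sigma[x]_r : sums of squares of total degree at most r, encoded via
   msize s <= r.+1 (msize = 1 + degree, msize 0 = 0). *)
Definition sos_le (r : nat) (s : {mpoly R[n]}) : Prop :=
  is_sos s /\ (msize s <= r.+1)%N.

(* Q(1-x_1^2,...,1-x_n^2)_r = Sigma_r + sum_i (1 - x_i^2) Sigma_{r-2};
   Sigma_{r-2} is encoded by msize <= r - 1 (truncated), so that for r < 2
   it is {0}, as Sigma of negative degree must be. *)
Definition trunc_qmodule (r : nat) (p : {mpoly R[n]}) : Prop :=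
  exists (s0 : {mpoly R[n]}) (s : 'I_n -> {mpoly R[n]}),
    sos_le r s0 /\
    (forall i, is_sos (s i) /\ (msize (s i) <= r.-1)%N) /\
    p = s0 + \sum_(i < n) (1 - 'X_i ^+ 2) * s i.

End Defs.

(* Write p = sum_a c_a T_a.  For every real c and every polynomial t,
     |c| - c t = |c|/2 (1 - sg(c) t)^2 + |c|/2 (1 - t^2),
   so it suffices to put 1 - T_a^2 in the quadratic module.  Telescoping over
   the variables, 1 - prod_i t_i^2 = sum_i (prod_(j<i) t_j)^2 (1 - t_i^2), and
   the Pell identity T_k^2 + (1 - x^2) U_(k-1)^2 = 1 turns each factor
   1 - T_(a_i)(x_i)^2 into (1 - x_i^2) times a square.  The degree bounds hold
   because T_a is a nonzero multiple of x^a plus terms of lower degree, so every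
   a in the Chebyshev support of p satisfies |a| <= deg p. *)

From mathcomp Require Import all_boot all_order all_algebra.
From mathcomp Require Import reals.
From mathcomp Require Import mpoly bigenough ssrcomplements.
From mathcomp Require Import ring zify.
From Stdlib Require Import ClassicalEpsilon.
Import Order.TTheory GRing.Theory Num.Theory BigEnough.
Set Implicit Arguments. Unset Strict Implicit. Unset Printing Implicit Defensive.
Local Open Scope ring_scope.

Section ChebyshevUnivariate.
Variable R : realType.
Local Notation T := (chebT R).

Lemma cheb_pairE k : cheb_pair R k = (T k, T k.+1).
Proof.
elim: k => [//|k IHk] /=; rewrite IHk /chebT /=.
by case: (cheb_pair R k) IHk => a b [-> ->].
Qed.

Lemma chebT0 : T 0 = 1. Proof. by []. Qed.
Lemma chebT1 : T 1 = 'X. Proof. by []. Qed.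
Lemma chebTSS k : T k.+2 = 2%:R *: 'X * T k.+1 - T k.
Proof. by rewrite /chebT /= cheb_pairE. Qed.

(* chebU k is the Chebyshev polynomial of the second kind U_(k-1), with U_(-1) = 0. *)
Fixpoint chebU (k : nat) : {poly R} :=
  if k is k'.+1 then 'X * chebU k' + T k' else 0.

Lemma chebTS k : T k.+1 = 'X * T k - (1 - 'X ^+ 2) * chebU k.
Proof.
elim: k => [|k IHk]; first by rewrite chebT1 chebT0 /= mulr0 subr0 mulr1.
by rewrite chebTSS /= -mul_polyC polyC_natr IHk; ring.
Qed.

Lemma chebT_pell k : T k ^+ 2 + (1 - 'X ^+ 2) * chebU k ^+ 2 = 1.
Proof.
elim: k => [|k IHk]; first by rewrite chebT0 /= expr0n /= mulr0 addr0 expr1n.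
by rewrite chebTS /= -[RHS]IHk; ring.
Qed.

Lemma size_chebT k : size (T k) = k.+1.
Proof.
suff [] : size (T k) = k.+1 /\ size (T k.+1) = k.+2 by [].
elim: k => [|k [IHk IHk1]]; first by rewrite chebT0 chebT1 size_polyX size_poly1.
have nzT : T k.+1 != 0 by rewrite -size_poly_eq0 IHk1.
have sizeXT : size (2%:R *: (T k.+1 * 'X)) = k.+3.
  by rewrite size_scale ?pnatr_eq0 // size_mulX // IHk1.
split=> //; rewrite chebTSS -scalerAl mulrC size_polyDl sizeXT //.
by rewrite size_polyN IHk.
Qed.

Lemma chebT_neq0 k : T k != 0.
Proof. by rewrite -size_poly_eq0 size_chebT. Qed.

Lemma size_chebT_sub_lead k : (size (T k - lead_coef (T k) *: 'X^k)%R <= k)%N.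
Proof.
apply/leq_sizeP => j le_kj; rewrite coefB coefZ coefXn lead_coefE size_chebT.
have [->|ne_jk] := eqVneq j k; first by rewrite mulr1 subrr.
by rewrite mulr0 subr0 nth_default // size_chebT; lia.
Qed.

Lemma size_chebU k : (size (chebU k) <= k)%N.
Proof.
elim: k => [|k IHk] /=; first by rewrite size_poly0.
rewrite (leq_trans (size_polyD _ _)) // geq_max size_chebT leqnn andbT.
have [->|nz] := eqVneq (chebU k) 0; first by rewrite mulr0 size_poly0.
by rewrite mulrC size_mulX.
Qed.

End ChebyshevUnivariate.

Section MsizeBounds.
Variables (R : idomainType) (n : nat).
Implicit Types p q : {mpoly R[n]}.

Lemma msizeM_le_pred p q : (msize (p * q) <= (msize p + msize q).-1)%N.
Proof.
have [->|nz_p] := eqVneq p 0; first by rewrite mul0r msize0.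
have [->|nz_q] := eqVneq q 0; first by rewrite mulr0 msize0.
by rewrite msizeM.
Qed.

Lemma msizeD_leq p q k :
  (msize p <= k)%N -> (msize q <= k)%N -> (msize (p + q) <= k)%N.
Proof. by move=> le_p le_q; rewrite (leq_trans (msizeD_le _ _)) // geq_max le_p. Qed.

Lemma msize_sum_leq (I : Type) (r : seq I) (P : pred I) (F : I -> {mpoly R[n]}) k :
  (forall i, P i -> msize (F i) <= k)%N -> (msize (\sum_(i <- r | P i) F i) <= k)%N.
Proof.
move=> le_F; elim/big_ind: _ => //; first by rewrite msize0.
by move=> p q /msizeD_leq; apply.
Qed.

Lemma msize_prod_leq (I : Type) (r : seq I) (P : pred I) (F : I -> {mpoly R[n]})
    (d : I -> nat) :
  (forall i, P i -> msize (F i) <= (d i).+1)%N ->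
  (msize (\prod_(i <- r | P i) F i) <= (\sum_(i <- r | P i) d i).+1)%N.
Proof.
move=> le_F; elim: r => [|i r IHr]; first by rewrite !big_nil msize1.
rewrite !big_cons; case: ifP => // Pi.
apply: leq_trans (msizeM_le_pred _ _) _.
by have := leq_add (le_F i Pi) IHr; lia.
Qed.

Lemma msize_sub_prod_leq (I : Type) (r : seq I) (F G : I -> {mpoly R[n]})
    (d : I -> nat) :
  (forall i, msize (G i) <= (d i).+1)%N ->
  (forall i, msize (F i - G i) <= d i)%N ->
  (msize (\prod_(i <- r) F i - \prod_(i <- r) G i) <= \sum_(i <- r) d i)%N.
Proof.
move=> le_G le_FG; elim: r => [|i r IHr]; first by rewrite !big_nil subrr msize0.
rewrite !big_cons; set PF := \prod_(j <- r) F j in IHr *.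
set PG := \prod_(j <- r) G j in IHr *.
have -> : F i * PF - G i * PG = (F i - G i) * PF + G i * (PF - PG) by ring.
have le_PF : (msize PF <= (\sum_(j <- r) d j).+1)%N.
  have -> : PF = (PF - PG) + PG by rewrite subrK.
  by apply: msizeD_leq; [apply: leq_trans IHr _ | apply: msize_prod_leq].
apply: msizeD_leq; apply: leq_trans (msizeM_le_pred _ _) _.
  by have := leq_add (le_FG i) le_PF; lia.
by have := leq_add (le_G i) IHr; lia.
Qed.

Lemma msize_sqr_leq p k : (msize p <= k)%N -> (msize (p ^+ 2) <= (2 * k).-1)%N.
Proof. by move=> le_pk; rewrite expr2 (leq_trans (msizeM_le_pred _ _)) //; lia. Qed.

Lemma msize_mpolyXn (i : 'I_n) k : msize ('X_i ^+ k : {mpoly R[n]}) = k.+1.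
Proof. by rewrite mpolyXn msizeX mdegMn mdeg1 mul1n. Qed.

End MsizeBounds.

Lemma seq_argmax (T : eqType) (s : seq T) (f : T -> nat) x : x \in s ->
  exists2 y, y \in s & forall z, z \in s -> (f z <= f y)%N.
Proof.
move=> x_s; have has_k : exists k, has (fun y => f y == k) s.
  by exists (f x); apply/hasP; exists x.
have le_max k : has (fun y => f y == k) s -> (k <= \max_(y <- s) f y)%N.
  by case/hasP => y y_s /eqP <-; apply: leq_bigmax_seq.
case: (ex_maxnP has_k le_max) => k /hasP [y y_s /eqP <-] max_k.
by exists y => // z z_s; apply: max_k; apply/hasP; exists z.
Qed.

Lemma one_sub_prod_sqr (R : comPzRingType) (F : nat -> R) m :
  1 - (\prod_(j < m) F j) ^+ 2 = \sum_(i < m) (\prod_(j < i) F j) ^+ 2 * (1 - F i ^+ 2).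
Proof.
elim: m => [|m IHm]; first by rewrite !big_ord0 expr1n subrr.
by rewrite big_ord_recr [RHS]big_ord_recr /= -IHm; ring.
Qed.

Lemma one_sub_prod_sqr_ord (R : comPzRingType) m (F : 'I_m -> R) :
  1 - (\prod_(i < m) F i) ^+ 2 =
  \sum_(i < m) (\prod_(j < m | (j < i)%N) F j) ^+ 2 * (1 - F i ^+ 2).
Proof.
pose G j := if insub j is Some i then F i else 1.
have GE (i : 'I_m) : G i = F i by rewrite /G valK.
under eq_bigr do rewrite -GE.
rewrite one_sub_prod_sqr; apply: eq_bigr => i _.
rewrite GE (big_ord_widen m _ (ltnW (ltn_ord i))).
by congr (_ ^+ 2 * _); apply: eq_bigr => j _; rewrite GE.
Qed.

Section QuadraticModule.
Variables (R : realType) (n : nat).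
Implicit Types p q : {mpoly R[n]}.

Lemma is_sos0 : is_sos (0 : {mpoly R[n]}).
Proof. by exists [::]; rewrite big_nil. Qed.

Lemma is_sos_sqr q : is_sos (q ^+ 2).
Proof. by exists [:: q]; rewrite big_seq1. Qed.

Lemma is_sosD p q : is_sos p -> is_sos q -> is_sos (p + q).
Proof. by move=> [ps ->] [qs ->]; exists (ps ++ qs); rewrite big_cat. Qed.

Lemma trunc_qmodule0 r : trunc_qmodule r (0 : {mpoly R[n]}).
Proof.
exists 0, (fun _ => 0); split; [split|split].
- exact: is_sos0.
- by rewrite msize0.
- by move=> i; split; [exact: is_sos0 | rewrite msize0].
by rewrite big1 ?addr0 // => i _; rewrite mulr0.
Qed.

Lemma trunc_qmoduleD r p q :
  trunc_qmodule r p -> trunc_qmodule r q -> trunc_qmodule r (p + q).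
Proof.
move=> [s0 [s [[sos_s0 le_s0] [sos_s ->]]]] [t0 [t [[sos_t0 le_t0] [sos_t ->]]]].
exists (s0 + t0), (fun i => s i + t i); split; [split|split].
- exact: is_sosD.
- exact: msizeD_leq.
- move=> i; have [sos_si le_si] := sos_s i; have [sos_ti le_ti] := sos_t i.
  by split; [apply: is_sosD | apply: msizeD_leq].
rewrite addrACA -big_split /=; congr (_ + _).
by apply: eq_bigr => i _; rewrite mulrDr.
Qed.

Lemma trunc_qmodule_sum r (I : Type) (s : seq I) (P : pred I) (F : I -> {mpoly R[n]}) :
  (forall i, P i -> trunc_qmodule r (F i)) -> trunc_qmodule r (\sum_(i <- s | P i) F i).
Proof.
move=> qF; elim/big_ind: _ => //; [exact: trunc_qmodule0 | exact: trunc_qmoduleD].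
Qed.

Lemma norm_sub_scale (c : R) q :
  `|c|%:MP - c *: q = (`|c| / 2) *: (1 - Num.sg c *: q) ^+ 2 + (`|c| / 2) *: (1 - q ^+ 2).
Proof.
rewrite -!mul_mpolyC; set H := (`|c| / 2)%:MP; set G := (Num.sg c)%:MP.
have NE : `|c|%:MP = H + H by rewrite -mpolyCD -splitr.
have CE : c%:MP = G * (H + H) by rewrite -NE -mpolyCM -numEsg.
have HG : H * (G ^+ 2 - 1) = 0.
  rewrite /H /G; have [->|nz_c] := eqVneq c 0; first by rewrite normr0 mul0r mpolyC0 mul0r.
  by rewrite -rmorphXn sqr_sg nz_c mulr1n rmorph1 subrr mulr0.
rewrite NE CE; symmetry.
transitivity (H + H - G * (H + H) * q + H * (G ^+ 2 - 1) * q ^+ 2); first by ring.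
by rewrite HG mul0r addr0.
Qed.

End QuadraticModule.

Section ChebyshevMultivariate.
Variables (R : realType) (n : nat).
Local Notation MP := {mpoly R[n]}.
Local Notation T := (chebT R).
Local Notation TM := (chebT_multi R (n := n)).
Local Notation cheb_eval := (@cheb_eval R n).
Local Notation at_var i := (horner_alg ('X_i : MP)).

Lemma at_varE i (q : {poly R}) : at_var i q = \sum_(j < size q) q`_j *: 'X_i ^+ j.
Proof.
have le_size : (size (map_poly (in_alg MP) q) <= size q)%N.
  by apply/leq_sizeP => j le_j; rewrite coef_map /= nth_default ?scale0r.
rewrite /horner_alg /horner_morph (horner_coef_wide _ le_size).
by apply: eq_bigr => j _; rewrite coef_map /= mulr_algl.
Qed.

Lemma chebT_varE k i : chebT_var R k i = at_var i (T k).
Proof. by rewrite at_varE. Qed.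

Lemma msize_at_var i (q : {poly R}) : (msize (at_var i q) <= size q)%N.
Proof.
rewrite at_varE; apply: msize_sum_leq => j _.
by rewrite (leq_trans (msizeZ_le _ _)) // msize_mpolyXn.
Qed.

Definition chebT_lead (a : 'X_{1..n}) : R := \prod_(i < n) lead_coef (T (a i)).

Lemma chebT_lead_neq0 a : chebT_lead a != 0.
Proof. by apply/prodf_neq0 => i _; rewrite lead_coef_eq0 chebT_neq0. Qed.

Lemma chebT_multiE a : TM a = \prod_(i < n) at_var i (T (a i)).
Proof. by apply: eq_bigr => i _; rewrite chebT_varE. Qed.

Lemma msize_chebT_multi a : (msize (TM a) <= (mdeg a).+1)%N.
Proof.
rewrite chebT_multiE mdegE; apply: msize_prod_leq => i _.
by rewrite (leq_trans (msize_at_var _ _)) // size_chebT.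
Qed.

Lemma msize_chebT_multi_sub_lead a :
  (msize (TM a - chebT_lead a *: 'X_[a]) <= mdeg a)%N.
Proof.
rewrite chebT_multiE mpolyXE_id -scaler_prod mdegE.
apply: msize_sub_prod_leq => i; first by rewrite (leq_trans (msizeZ_le _ _)) ?msize_mpolyXn.
have <- : at_var i (T (a i) - lead_coef (T (a i)) *: 'X^(a i)) =
          at_var i (T (a i)) - lead_coef (T (a i)) *: 'X_i ^+ (a i).
  by rewrite rmorphB -mul_polyC rmorphM /= horner_algC rmorphXn /= horner_algX mulr_algl.
exact: leq_trans (msize_at_var _ _) (size_chebT_sub_lead _ _).
Qed.

Lemma mcoeff_chebT_multi a b :
  (mdeg a <= mdeg b)%N -> (TM a)@_b = (a == b)%:R * chebT_lead a.
Proof.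
move=> le_ab; rewrite -[TM a](subrK (chebT_lead a *: 'X_[a])) mcoeffD mcoeffZ mcoeffX.
rewrite memN_msupp_eq0 ?add0r 1?mulrC //; apply: msize_mdeg_ge.
exact: leq_trans (msize_chebT_multi_sub_lead a) le_ab.
Qed.

Lemma cheb_evalE c k : (msize c <= k)%N ->
  cheb_eval c = \sum_(m : 'X_{1..n < k}) c@_m *: TM m.
Proof.
move=> le_ck; set I : subFinType _ := 'X_{1..n < k}.
rewrite /cheb_eval (big_mksub I) ?msupp_uniq //=; last first.
  by move=> m /msize_mdeg_lt /leq_trans; apply.
by rewrite big_rmcond //= => m /memN_msupp_eq0 ->; rewrite scale0r.
Qed.

Lemma cheb_eval0 : cheb_eval 0 = 0.
Proof. by rewrite /cheb_eval big1 // => a _; rewrite mcoeff0 scale0r. Qed.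

Lemma cheb_evalD c1 c2 : cheb_eval (c1 + c2) = cheb_eval c1 + cheb_eval c2.
Proof.
pose_big_enough k.
  rewrite !(cheb_evalE (k := k)) // -big_split; apply: eq_bigr => m _.
  by rewrite mcoeffD scalerDl.
by close.
Qed.

Lemma cheb_evalZ x c : cheb_eval (x *: c) = x *: cheb_eval c.
Proof.
pose_big_enough k.
  rewrite !(cheb_evalE (k := k)) // scaler_sumr; apply: eq_bigr => m _.
  by rewrite mcoeffZ scalerA.
by close.
Qed.

Lemma cheb_evalX m : cheb_eval 'X_[m] = TM m.
Proof. by rewrite /cheb_eval msuppX big_seq1 mcoeffX eqxx scale1r. Qed.

(* By induction on msize: 'X_[m] is a multiple of TM m up to terms of smaller degree. *)
Lemma cheb_eval_surj q : exists c, cheb_eval c = q.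
Proof.
suff surj_k k : (msize q <= k)%N -> exists c, cheb_eval c = q by apply: surj_k.
elim: k q => [|k IHk] q le_qk.
  by move: le_qk; rewrite leqn0 msize_poly_eq0 => /eqP ->; exists 0; rewrite cheb_eval0.
rewrite [q]mpolyE big_seq; elim/big_ind: _ => [|_ _ [c1 <-] [c2 <-]|m m_q].
- by exists 0; rewrite cheb_eval0.
- by exists (c1 + c2); rewrite cheb_evalD.
have le_mk : (msize (TM m - chebT_lead m *: 'X_[m]) <= k)%N.
  rewrite (leq_trans (msize_chebT_multi_sub_lead m)) //.
  by have := msize_mdeg_lt m_q; lia.
have [c eq_c] := IHk _ le_mk; exists ((q@_m / chebT_lead m) *: ('X_[m] - c)).
rewrite cheb_evalZ -scaleN1r cheb_evalD cheb_evalZ cheb_evalX scaleN1r eq_c.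
by rewrite opprB addrC subrK scalerA divfK ?chebT_lead_neq0.
Qed.

Lemma cheb_coefsK p : cheb_eval (cheb_coefs p) = p.
Proof. exact: epsilon_spec (cheb_eval_surj p). Qed.

Lemma mdeg_lt_msize_cheb_eval c a : a \in msupp c -> (mdeg a < msize (cheb_eval c))%N.
Proof.
move=> a_c; have [b b_c max_b] := seq_argmax mdeg a_c.
apply: leq_ltn_trans (max_b a a_c) (msize_mdeg_lt _); rewrite mcoeff_msupp.
have -> : (cheb_eval c)@_b = c@_b * chebT_lead b.
  rewrite /cheb_eval raddf_sum (bigD1_seq b) ?msupp_uniq //= big1_seq.
    by rewrite addr0 mcoeffZ mcoeff_chebT_multi // eqxx mul1r.
  move=> a' /andP [ne_a'b a'_c].
  by rewrite mcoeffZ mcoeff_chebT_multi ?max_b // (negbTE ne_a'b) mul0r mulr0.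
by rewrite mulf_neq0 ?chebT_lead_neq0 // -mcoeff_msupp.
Qed.

Definition chebT_prefix (a : 'X_{1..n}) (i : 'I_n) : MP :=
  \prod_(j < n | (j < i)%N) at_var j (T (a j)).

Lemma one_sub_chebT_multi_sqr a :
  1 - TM a ^+ 2 =
  \sum_(i < n) (1 - 'X_i ^+ 2) * (chebT_prefix a i * at_var i (chebU R (a i))) ^+ 2.
Proof.
rewrite chebT_multiE one_sub_prod_sqr_ord; apply: eq_bigr => i _.
have pell := congr1 (at_var i) (chebT_pell R (a i)).
rewrite rmorphD rmorphXn rmorphM rmorphB rmorph1 !rmorphXn /= horner_algX rmorph1 in pell.
have -> : 1 - at_var i (T (a i)) ^+ 2 = (1 - 'X_i ^+ 2) * at_var i (chebU R (a i)) ^+ 2.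
  by rewrite -[X in X - _]pell; ring.
by rewrite /chebT_prefix; ring.
Qed.

Lemma msize_chebT_prefix_chebU a i :
  (msize (chebT_prefix a i * at_var i (chebU R (a i))) <= mdeg a)%N.
Proof.
have le_P : (msize (chebT_prefix a i) <= (\sum_(j < n | (j < i)%N) a j).+1)%N.
  apply: msize_prod_leq => j _.
  by rewrite (leq_trans (msize_at_var _ _)) // size_chebT.
have le_U : (msize (at_var i (chebU R (a i))) <= a i)%N.
  exact: leq_trans (msize_at_var _ _) (size_chebU _ _).
have le_sum : (\sum_(j < n | (j < i)%N) a j + a i <= mdeg a)%N.
  rewrite mdegE [leqRHS](bigID (fun j : 'I_n => (j < i)%N)) /= leq_add2l.
  by rewrite (bigD1 i) ?ltnn //= leq_addr.
apply: leq_trans (msizeM_le_pred _ _) (leq_trans _ le_sum).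
by rewrite -subn1 leq_subLR add1n -addSn leq_add.
Qed.

Lemma trunc_qmodule_chebT c a d :
  (mdeg a <= d)%N -> trunc_qmodule (2 * d) (`|c|%:MP - c *: TM a).
Proof.
move=> le_ad; set r := Num.sqrt (`|c| / 2).
have r2 : r ^+ 2 = `|c| / 2 by rewrite sqr_sqrtr // divr_ge0.
exists ((r *: (1 - Num.sg c *: TM a)) ^+ 2).
exists (fun i => (r *: (chebT_prefix a i * at_var i (chebU R (a i)))) ^+ 2).
split; [split|split; [move=> i; split|]]; try exact: is_sos_sqr.
- have le_d1 : (msize (r *: (1 - Num.sg c *: TM a)) <= d.+1)%N.
    rewrite (leq_trans (msizeZ_le _ _)) // msizeD_leq ?msizeN ?msize1 //.
    by rewrite (leq_trans (msizeZ_le _ _)) // (leq_trans (msize_chebT_multi _)).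
  by rewrite (leq_trans (msize_sqr_leq le_d1)) //; lia.
- apply: msize_sqr_leq; rewrite (leq_trans (msizeZ_le _ _)) //.
  exact: leq_trans (msize_chebT_prefix_chebU a i) le_ad.
rewrite norm_sub_scale one_sub_chebT_multi_sqr scaler_sumr exprZn r2.
by congr (_ + _); apply: eq_bigr => i _; rewrite exprZn r2 scalerAr.
Qed.

End ChebyshevMultivariate.

Theorem corollary3 (R : realType) (n : nat) (p : {mpoly R[n]}) :
  trunc_qmodule (2 * mdegree p)%N ((cheb_norm1 p)%:MP - p).
Proof.
set c := cheb_coefs p.
have le_deg a : a \in msupp c -> (mdeg a <= mdegree p)%N.
  by move=> a_c; have := mdeg_lt_msize_cheb_eval a_c; rewrite cheb_coefsK /mdegree; lia.
rewrite /cheb_norm1 -/c -{2}(cheb_coefsK p) -/c /cheb_eval raddf_sum -sumrB big_seq.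
by apply: trunc_qmodule_sum => a a_c; apply: trunc_qmodule_chebT; apply: le_deg.
Qed.
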